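(* Let $\Theta$ be a finite set of states, $\pi$ a probability distribution on $\Theta$ (Alice's prior), $\Gamma\subset\Theta$ with $0<\pi(\Gamma)<1$, and $\widetilde\pi$ another probability distribution on $\Theta$ (Carroll's prior). Then Carroll is $\Gamma$-optimistic if and only if $\widetilde\pi$ is a $\Gamma$-strengthening of $\pi$.
   Context: A signaling structure on $\Theta$ is a finite set $S$ of signals with probabilities $\sigma(s\mid\theta)\ge0$, $\sum_{s\in S}\sigma(s\mid\theta)=1$ for each $\theta$. For a prior $\rho$ on $\Theta$, $\mathbb{P}_{\rho,\sigma}$ is the probability on $\Theta\times S$ given by $\mathbb{P}_{\rho,\sigma}(\theta,s)=\rho(\theta)\sigma(s\mid\theta)$. Write $\mathbb{P}=\mathbb{P}_{\pi,\sigma}$ and $\widetilde{\mathbb{P}}=\mathbb{P}_{\widetilde\pi,\sigma}$. Alice's posterior of $\Gamma$ is $Q_\Gamma(s)=\mathbb{P}(\Gamma\mid s)$ (for $\mathbb{P}(s)>0$). $(Q_\Gamma,\widetilde{\mathbb{P}})$ denotes the random variable taking value $Q_\Gamma(s)$ with probability $\widetilde{\mathbb{P}}(s)$, and $(Q_\Gamma,\mathbb{P})$ the one taking value $Q_\Gamma(s)$ with probability $\mathbb{P}(s)$. $X\ge_{\mathrm{lr}}Y$ (likelihood ratio order) means $\mathbb{P}(X=v)/\mathbb{P}(Y=v)$ is weakly increasing in $v$ (equivalently $\mathbb{P}(X=u)\mathbb{P}(Y=v)\le\mathbb{P}(X=v)\mathbb{P}(Y=u)$ for $u<v$). Carroll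 is $\Gamma$-optimistic if $(Q_\Gamma,\widetilde{\mathbb{P}})\ge_{\mathrm{lr}}(Q_\Gamma,\mathbb{P})$ for every signaling structure $(S,\sigma)$ on $\Theta$. $\widetilde\pi$ is a $\Gamma$-strengthening of $\pi$ if $\widetilde\pi=a\pi^\Gamma+(1-a)\pi$ for some $a\in[0,1]$, where $\pi^\Gamma(\theta)=\pi(\theta\mid\Gamma)$. *)

From mathcomp Require Import all_boot all_order all_algebra.
Set Implicit Arguments. Unset Strict Implicit. Unset Printing Implicit Defensive.
Import Order.TTheory GRing.Theory Num.Theory.
Local Open Scope ring_scope.

Section Defs.
Variable R : realFieldType.

Definition is_distr (T : finType) (p : T -> R) : Prop :=
  (forall t, 0 <= p t) /\ \sum_(t : T) p t = 1.

(* sig is a signaling structure on Theta with (finite) signal set S: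
   sig th s = sigma(s | th) *)
Definition signaling (Theta S : finType) (sig : Theta -> S -> R) : Prop :=
  (forall th s, 0 <= sig th s) /\ (forall th, \sum_(s : S) sig th s = 1).

Definition sigP (Theta S : finType) (rho : Theta -> R) (sig : Theta -> S -> R)
  (s : S) : R := \sum_(th : Theta) rho th * sig th s.

(* Alice's posterior Q_Gamma(s) = P(Gamma | s); when P(s) = 0 the value is
   the field convention x / 0 = 0 *)
Definition QGamma (Theta S : finType) (pi : Theta -> R) (Gamma : {set Theta})
  (sig : Theta -> S -> R) (s : S) : R :=
  (\sum_(th in Gamma) pi th * sig th s) / sigP pi sig s.

(* probability mass function of the random variable taking value Q s with
   probability w s *)
Definition rv_pmf (S : finType) (Q : S -> R) (w : S -> R) (v : R) : R :=
  \sum_(s : S | Q s == v) w s.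

Definition lr_ge (pX pY : R -> R) : Prop :=
  forall u v : R, u < v -> pX u * pY v <= pX v * pY u.

Definition optimistic (Theta : finType) (pi pit : Theta -> R)
  (Gamma : {set Theta}) : Prop :=
  forall (S : finType) (sig : Theta -> S -> R), signaling sig ->
    lr_ge (rv_pmf (QGamma pi Gamma sig) (sigP pit sig))
          (rv_pmf (QGamma pi Gamma sig) (sigP pi sig)).

Definition cond_prior (Theta : finType) (pi : Theta -> R) (Gamma : {set Theta})
  (th : Theta) : R :=
  (if th \in Gamma then pi th else 0) / \sum_(t in Gamma) pi t.

Definition strengthening (Theta : finType) (pi pit : Theta -> R)
  (Gamma : {set Theta}) : Prop :=
  exists a : R, 0 <= a <= 1 /\
    forall th, pit th = a * cond_prior pi Gamma th + (1 - a) * pi th.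

End Defs.

(* If pit = pi + a (pi^Gamma - pi), then under Carroll's prior the law of
   Alice's posterior q is its law under Alice's prior reweighted by the
   nondecreasing factor 1 - a + a q / pi(Gamma), hence larger in the
   likelihood ratio order.  Conversely, a two-signal structure with
   sigma(high | th) = 1/2 + e y(th) makes "high" the more optimistic signal
   exactly when E_{pi^Gamma}[y] > E_pi[y], and optimism then yields
   E_pit[y] >= E_pi[y].  Thus y . (pit - pi) >= 0 whenever
   y . (pi^Gamma - pi) > 0, which forces pit - pi = c (pi^Gamma - pi) with
   c >= 0; evaluating pit >= 0 at a state outside Gamma gives c <= 1. *)

From mathcomp Require Import all_boot all_order all_algebra.
From mathcomp Require Import ring lra.
Import Order.TTheory GRing.Theory Num.Theory.
Set Implicit Arguments.
Unset Strict Implicit.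
Unset Printing Implicit Defensive.
Local Open Scope ring_scope.

Section Collinear.
Variables (R : realFieldType) (T : finType).
Implicit Types (f g h v d : T -> R).

Lemma sum_lincomb f g h (a b : R) :
  \sum_t f t * (a * g t + b * h t) =
  a * \sum_t f t * g t + b * \sum_t f t * h t.
Proof. by rewrite !mulr_sumr -big_split; apply: eq_bigr => t _ /=; ring. Qed.

Lemma sum_sqr_eq0 f : \sum_t f t * f t = 0 -> forall t, f t = 0.
Proof.
move=> /psumr_eq0P f0 t; apply/eqP; rewrite -sqrf_eq0 expr2.
by apply/eqP/f0 => // u _; rewrite -expr2 sqr_ge0.
Qed.

Lemma halfspace_sub_collinear v d :
  (exists t, v t != 0) ->
  (forall y, 0 < \sum_t v t * y t -> 0 <= \sum_t d t * y t) ->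
  exists2 c, 0 <= c & forall t, d t = c * v t.
Proof.
move=> [t0 vt0] vd.
set n := \sum_t v t * v t; set m := \sum_t d t * v t.
have n_gt0 : 0 < n.
  rewrite /n (bigD1 t0) //= -expr2 ltr_pwDl ?sqr_ge0 //.
    by rewrite lt0r sqr_ge0 sqrf_eq0 vt0.
  by apply: sumr_ge0 => t _; rewrite -expr2 sqr_ge0.
have m_ge0 : 0 <= m by exact: vd.
(* e is the component of d orthogonal to v. *)
set c := m / n; set e := fun t => 1 * d t + (- c) * v t.
have ve0 : \sum_t v t * e t = 0.
  rewrite sum_lincomb mul1r -/n (eq_bigr (fun t => d t * v t)) => [|t _]; last exact: mulrC.
  by rewrite /c -/m mulNr divfK ?subrr // gt_eqF.
set E := \sum_t e t * e t.
have de : \sum_t d t * e t = E.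
  rewrite (eq_bigr (fun t => e t * (1 * e t + c * v t))) => [|t _]; last by rewrite /e; ring.
  rewrite sum_lincomb mul1r; under [X in _ + c * X]eq_bigr do rewrite mulrC.
  by rewrite ve0 mulr0 addr0.
have E0 : E = 0.
  apply: le_anti; rewrite sumr_ge0 ?andbT => [|t _]; last by rewrite -expr2 sqr_ge0.
  rewrite leNgt; apply/negP => E_gt0.
  (* y . v = E n > 0 but y . d = - E < 0 *)
  have := vd (fun t => E * v t + (- (m + 1)) * e t).
  rewrite sum_lincomb ve0 sum_lincomb -/n -/m de mulr0 addr0 mulr_gt0 // => /(_ isT).
  by rewrite leNgt; apply/negP; nra.
exists c; first by rewrite divr_ge0 // ltW.
move=> t; have /eqP := sum_sqr_eq0 E0 t.
by rewrite /e mul1r mulNr subr_eq0 => /eqP.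
Qed.
End Collinear.

Section Priors.
Variables (R : realFieldType) (Theta : finType).
Implicit Types (pi pit rho y : Theta -> R) (Gamma : {set Theta}).

Lemma distr_mean_norm_le rho y (M : R) :
  is_distr rho -> (forall t, `|y t| <= M) -> `|\sum_t rho t * y t| <= M.
Proof.
move=> [rho0 rho1] yM; rewrite -[M]mul1r -rho1 mulr_suml.
apply: le_trans (ler_norm_sum _ _ _) _; apply: ler_sum => t _.
by rewrite normrM ger0_norm // ler_wpM2l.
Qed.

Lemma mean_shift rho (a : R) y :
  is_distr rho -> \sum_t rho t * (a + y t) = a + \sum_t rho t * y t.
Proof.
case=> _ rho1; under eq_bigr do rewrite mulrDr.
by rewrite big_split -mulr_suml rho1 mul1r.
Qed.

Lemma cond_prior_distr pi Gamma :
  (forall t, 0 <= pi t) -> 0 < \sum_(t in Gamma) pi t -> is_distr (cond_prior pi Gamma).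
Proof.
move=> pi0 g0; split => [t | ]; first by apply: divr_ge0; [case: ifP | exact: ltW].
by rewrite -mulr_suml -big_mkcond divff ?gt_eqF.
Qed.

Lemma distr_mass_outside pi Gamma :
  is_distr pi -> \sum_(t in Gamma) pi t < 1 -> exists2 t, t \notin Gamma & 0 < pi t.
Proof.
case=> pi0 pi1 g1; have /(psumr_neq0P (fun t _ => pi0 t)) [t /andP[]] :
    \sum_(t | t \notin Gamma) pi t <> 0.
  by rewrite (bigID (mem Gamma)) /= in pi1 => out0; move: g1; rewrite -pi1 out0 addr0 ltxx.
by exists t.
Qed.

Lemma sigP_mix rho rho1 rho2 (a b : R) (S : finType) (sig : Theta -> S -> R) s :
  (forall t, rho t = a * rho1 t + b * rho2 t) ->
  sigP rho sig s = a * sigP rho1 sig s + b * sigP rho2 sig s.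
Proof.
by move=> rhoE; rewrite /sigP !mulr_sumr -big_split; apply: eq_bigr => t _ /=; rewrite rhoE; ring.
Qed.

Lemma sigP_cond_prior pi (S : finType) (sig : Theta -> S -> R) :
  (forall t, 0 <= pi t) -> (forall t s, 0 <= sig t s) -> forall Gamma s,
  sigP (cond_prior pi Gamma) sig s =
  QGamma pi Gamma sig s * sigP pi sig s / \sum_(t in Gamma) pi t.
Proof.
move=> pi0 sig0 Gamma s; set g := \sum_(t in Gamma) pi t.
have -> : sigP (cond_prior pi Gamma) sig s = (\sum_(t in Gamma) pi t * sig t s) / g.
  rewrite /sigP /cond_prior [RHS]mulr_suml [RHS]big_mkcond; apply: eq_bigr => t _ /=.
  by case: ifP => _; rewrite ?mul0r // mulrAC.
congr (_ / g); rewrite /QGamma.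
have [P0 | /divfK -> //] := eqVneq (sigP pi sig s) 0.
rewrite P0 mulr0; apply: le_anti; rewrite sumr_ge0 ?andbT => [|t _]; last exact: mulr_ge0.
rewrite -[X in _ <= X]P0 /sigP [X in _ <= X](bigID (mem Gamma)) /= lerDl.
by apply: sumr_ge0 => t _; apply: mulr_ge0.
Qed.

Lemma strengthening_sigP pi pit Gamma (a : R) (S : finType) (sig : Theta -> S -> R) :
  (forall t, 0 <= pi t) -> (forall t s, 0 <= sig t s) ->
  (forall t, pit t = a * cond_prior pi Gamma t + (1 - a) * pi t) ->
  forall s, sigP pit sig s =
  (1 - a + a * QGamma pi Gamma sig s / \sum_(t in Gamma) pi t) * sigP pi sig s.
Proof.
by move=> pi0 sig0 pitE s; rewrite (sigP_mix _ _ pitE) sigP_cond_prior //; ring.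
Qed.

End Priors.

Section PosteriorLaw.
Variables (R : realFieldType) (S : finType).
Implicit Types (Q w : S -> R).

Lemma rv_pmf_ge0 Q w v : (forall s, 0 <= w s) -> 0 <= rv_pmf Q w v.
Proof. by move=> w0; apply: sumr_ge0. Qed.

Lemma rv_pmf_scale Q w w' (f : R -> R) v :
  (forall s, w' s = f (Q s) * w s) -> rv_pmf Q w' v = f v * rv_pmf Q w v.
Proof. by move=> w'E; rewrite /rv_pmf mulr_sumr; apply: eq_bigr => s /eqP <-. Qed.

Lemma lr_ge_scale (f p : R -> R) :
  {homo f : u v / u <= v} -> (forall v, 0 <= p v) -> lr_ge (fun v => f v * p v) p.
Proof.
move=> f_nd p0 u v /ltW /f_nd fuv.
by rewrite /= mulrAC; apply: ler_wpM2r => //; apply: ler_wpM2r.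
Qed.

End PosteriorLaw.

Lemma rv_pmf_bool (R : realFieldType) (Q w : bool -> R) b :
  Q true != Q false -> rv_pmf Q w (Q b) = w b.
Proof.
move=> Qtf; rewrite /rv_pmf big_mkcond big_bool /=.
by case: b; rewrite eqxx ?(negbTE Qtf) ?add0r // eq_sym (negbTE Qtf) addr0.
Qed.

Lemma strengthening_optimistic (R : realFieldType) (Theta : finType)
    (pi pit : Theta -> R) (Gamma : {set Theta}) :
  is_distr pi -> 0 < \sum_(t in Gamma) pi t ->
  strengthening pi pit Gamma -> optimistic pi pit Gamma.
Proof.
move=> [pi0 _] g0 [a [/andP[a0 _] pitE]] S sig [sig0 _] u v.
set f := fun q => 1 - a + a * q / \sum_(t in Gamma) pi t.
have sigP_pit := strengthening_sigP pi0 sig0 pitE.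
rewrite !(rv_pmf_scale (f := f) _ sigP_pit).
apply: lr_ge_scale => [q q' le_qq' | q].
  by rewrite lerD2l; apply: ler_wpM2r; [rewrite invr_ge0 ltW | exact: ler_wpM2l].
by apply: rv_pmf_ge0 => s; apply: sumr_ge0 => t _; exact: mulr_ge0.
Qed.

Section BinarySignal.
Variables (R : realFieldType) (Theta : finType).
Implicit Types (pi pit rho x : Theta -> R) (Gamma : {set Theta}).

Definition binary_signal x (t : Theta) (b : bool) : R := if b then x t else 1 - x t.

Lemma binary_signaling x : (forall t, 0 <= x t <= 1) -> signaling (binary_signal x).
Proof.
move=> x01; split => [t [] | t] /=; have /andP[x0 x1] := x01 t => //.
- by rewrite subr_ge0.
- by rewrite big_bool /= subrKC.
Qed.

Lemma sigP_binary_signal rho x b : is_distr rho ->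
  sigP rho (binary_signal x) b =
  if b then \sum_t rho t * x t else 1 - \sum_t rho t * x t.
Proof.
case=> _ rho1; case: b => //; rewrite /sigP /binary_signal.
by under eq_bigr do rewrite mulrBr mulr1; rewrite sumrB rho1.
Qed.

Lemma optimistic_binary_mean pi pit Gamma x :
  is_distr pi -> is_distr pit -> 0 < \sum_(t in Gamma) pi t ->
  optimistic pi pit Gamma -> (forall t, 0 <= x t <= 1) ->
  0 < \sum_t pi t * x t < 1 ->
  \sum_t pi t * x t < \sum_t cond_prior pi Gamma t * x t ->
  \sum_t pi t * x t <= \sum_t pit t * x t.
Proof.
move=> Hpi Hpit g0 opt x01 /andP[p0 p1] lt_pq.
have Hcond := cond_prior_distr Hpi.1 g0.
have [sig0 _] := binary_signaling x01.
set g := \sum_(t in Gamma) pi t in g0 Hcond.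
set Q := QGamma pi Gamma (binary_signal x).
have QE b : Q b = g * sigP (cond_prior pi Gamma) (binary_signal x) b /
                     sigP pi (binary_signal x) b.
  have P_neq0 : sigP pi (binary_signal x) b != 0.
    by rewrite sigP_binary_signal //; case: b; rewrite gt_eqF ?subr_gt0.
  by rewrite (sigP_cond_prior Hpi.1 sig0) -/g -/Q; field; rewrite P_neq0 gt_eqF.
have Qlt : Q false < Q true.
  rewrite !QE !sigP_binary_signal //=.
  rewrite ltr_pdivrMr ?subr_gt0 // mulrAC ltr_pdivlMr //; nra.
have := opt _ _ (binary_signaling x01) _ _ Qlt.
by rewrite !rv_pmf_bool ?gt_eqF // !sigP_binary_signal //=; nra.
Qed.

Lemma optimistic_halfspace pi pit Gamma :
  is_distr pi -> is_distr pit -> 0 < \sum_(t in Gamma) pi t ->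
  optimistic pi pit Gamma ->
  forall y, 0 < \sum_t (cond_prior pi Gamma t - pi t) * y t ->
            0 <= \sum_t (pit t - pi t) * y t.
Proof.
move=> Hpi Hpit g0 opt y.
have Hcond := cond_prior_distr Hpi.1 g0.
rewrite !(eq_bigr _ (fun t _ => mulrBl _ _ _)) !sumrB subr_gt0 subr_ge0 => lt_y.
set M := \sum_t `|y t|.
have M_ge0 : 0 <= M by apply: sumr_ge0 => t _.
set e := (4 * (M + 1))^-1.
have e_gt0 : 0 < e by rewrite invr_gt0 mulr_gt0 ?ltr_wpDl.
have ey t : `|e * y t| <= 4^-1.
  have yM : `|y t| <= M + 1.
    by rewrite /M (bigD1 t) //= -addrA lerDl addr_ge0 // sumr_ge0.
  rewrite normrM gtr0_norm //; apply: le_trans (ler_wpM2l (ltW e_gt0) yM) _.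
  by rewrite /e invfM -mulrA mulVf ?mulr1 // gt_eqF ?ltr_wpDl.
have mean_scale rho : \sum_t rho t * (e * y t) = e * \sum_t rho t * y t.
  by rewrite mulr_sumr; apply: eq_bigr => t _; rewrite mulrCA.
have mean_x rho : is_distr rho ->
    \sum_t rho t * (2^-1 + e * y t) = 2^-1 + e * \sum_t rho t * y t.
  by move=> Hrho; rewrite mean_shift // mean_scale.
have := optimistic_binary_mean (x := fun t => 2^-1 + e * y t) Hpi Hpit g0 opt.
rewrite !mean_x // lerD2l ler_pM2l //; apply.
- by move=> t; have := ey t; rewrite ler_norml => /andP[]; lra.
- have := distr_mean_norm_le Hpi ey; rewrite mean_scale ler_norml => /andP[]; lra.
- by rewrite ltrD2l ltr_pM2l.
Qed.

End BinarySignal.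

Theorem proposition3 (R : realFieldType) (Theta : finType)
  (pi pit : Theta -> R) (Gamma : {set Theta}) :
  is_distr pi -> is_distr pit ->
  0 < \sum_(t in Gamma) pi t < 1 ->
  (optimistic pi pit Gamma <-> strengthening pi pit Gamma).
Proof.
move=> Hpi Hpit /andP[g0 g1]; split; last exact: strengthening_optimistic.
move=> opt; have [t0 t0_out pi_t0_gt0] := distr_mass_outside Hpi g1.
have cond_t0 : cond_prior pi Gamma t0 = 0 by rewrite /cond_prior (negbTE t0_out) mul0r.
have [|c c_ge0 dE] := halfspace_sub_collinear _ (optimistic_halfspace Hpi Hpit g0 opt).
  by exists t0; rewrite cond_t0 sub0r oppr_eq0 gt_eqF.
exists c; split.
- by have := dE t0; have := Hpit.1 t0; rewrite cond_t0 c_ge0 /=; nra.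
- by move=> t; move/eqP: (dE t); rewrite subr_eq => /eqP ->; ring.
Qed.
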